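(* Let $w\in\mathbb R^5$ and suppose $\Sigma^w(\mathbf R_i)\ge\Sigma^w(\mathbf I)$ for all $1\le i\le 5$. Then for every reduced word $\mathbf U=\mathbf R_i\mathbf U'$ over $\{\mathbf R_1,\dots,\mathbf R_5\}$ (evaluated as a product of matrices), $\Sigma^w(\mathbf U)\ge\Sigma^w(\mathbf U')$.
   Context: Let $\mathbf e\in\mathbb R^5$ be the all-ones vector, $\mathbf e_i$ the $i$-th standard basis vector, $\mathbf I$ the $5\times5$ identity. For $1\le i\le 5$, $\mathbf R_i=\mathbf I+\mathbf e_i\mathbf e^\intercal-3\mathbf e_i\mathbf e_i^\intercal$ (the matrix equal to $\mathbf I$ except that its $i$-th row has diagonal entry $-1$ and all off-diagonal entries $1$). For a $5\times 5$ matrix $\mathbf U$, its weighted mass is $\Sigma^w(\mathbf U)=\mathbf e^\intercal\mathbf U w$. A word $\mathbf U_1\mathbf U_2\cdots\mathbf U_n$ with letters in $\{\mathbf R_1,\dots,\mathbf R_5\}$ is reduced if it contains no (consecutive) subword of the form $\mathbf R_i\mathbf R_i$, and no subword $\mathbf V_1\mathbf V_2\cdots\mathbf V_{2m}$ with $m\ge2$, $\mathbf V_1=\mathbf V_3$, $\mathbf V_{2m-2}=\mathbf V_{2m}$ and $\mathbf V_{2j}=\mathbf V_{2j+3}$ for $1\le j\le m-2$ (in particular no subword $(\mathbf R_i\mathbf R_j)^2$). *)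

(* Matrices over an arbitrary real field (R^5 instantiated
   with any realFieldType, which includes the real numbers). *)
From HB Require Import structures.
From mathcomp Require Import all_boot all_order all_algebra.
Set Implicit Arguments. Unset Strict Implicit. Unset Printing Implicit Defensive.
Import Order.TTheory GRing.Theory Num.Theory.
Local Open Scope ring_scope.

(* R_i = I + e_i e^T - 3 e_i e_i^T : identity except row i, which has
   diagonal entry -1 and off-diagonal entries 1. *)
Definition Rmx (R : realFieldType) (i : 'I_5) : 'M[R]_5 :=
  \matrix_(a < 5, b < 5)
    if a == i then (if b == i then -1 else 1) else (a == b)%:R.

(* weighted mass  Sigma^w(U) = e^T U w *)
Definition wmass (R : realFieldType) (U : 'M[R]_5) (w : 'cV[R]_5) : R :=
  \sum_(a < 5) (U *m w) a 0.

Definition word_mx (R : realFieldType) (s : seq 'I_5) : 'M[R]_5 :=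
  foldr (fun i M => Rmx R i *m M) 1%:M s.

(* V_k (1-indexed) of a word v *)
Definition letter (v : seq 'I_5) (k : nat) : 'I_5 := nth ord0 v k.-1.

Definition forbidden (v : seq 'I_5) : Prop :=
  exists m : nat, [/\ (2 <= m)%N, size v = (2 * m)%N,
    letter v 1 = letter v 3,
    letter v (2 * m - 2) = letter v (2 * m) &
    forall j : nat, (1 <= j)%N -> (j <= m - 2)%N ->
      letter v (2 * j) = letter v (2 * j + 3)].

Definition reduced (s : seq 'I_5) : Prop :=
  (forall k : nat, (k.+1 < size s)%N -> nth ord0 s k <> nth ord0 s k.+1) /\
  (forall v : seq 'I_5, infix v s -> ~ forbidden v).

From HB Require Import structures.
From mathcomp Require Import all_boot all_order all_algebra.
From mathcomp Require Import lra zify.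
Import Order.TTheory GRing.Theory Num.Theory.
Local Open Scope ring_scope.

(* Left multiplication by R_i changes the weighted mass of M by
   the "gain" g_i(M w) = sum(M w) - 3 (M w)_i, and the gains transform under
   R_j by the dual reflection  g_j |-> -g_j,  g_k |-> g_k + g_j  (k <> j).
   Hence the increment of the theorem, g_i(word(U') w), is the linear
   combination sum_k x_k g_k(w), where the coefficient vector x is obtained
   from the unit vector e_i by applying the dual reflections x |-> x_j :=
   sum(x) - 2 x_j letter by letter along U'.  The hypothesis says exactly
   g_k(w) >= 0, so it suffices that x stays nonnegative along reduced words.  An invariant on x relative to the last
   two letters p, c of the word (three inequalities, one of them relaxed
   while a forbidden zigzag pattern is "pending") holds for words of length
   two, is preserved by every reduced extension, and forces the next
   reflected vector to stay nonnegative. *)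

Section GainAlgebra.

Context {R : realFieldType}.
Implicit Types (x : 'I_5 -> R) (v w : 'cV[R]_5) (M : 'M[R]_5).

Lemma sum_uniq_le (I : finType) (x : I -> R) (s : seq I) :
  (forall k, 0 <= x k) -> uniq s -> \sum_(k <- s) x k <= \sum_k x k.
Proof.
move=> x0 us; rewrite big_uniq // big_mkcond /=.
by apply: ler_sum => k _; case: ifP.
Qed.

Lemma sum_update (f : 'I_5 -> R) j a :
  \sum_k (if k == j then a else f k) = \sum_k f k - f j + a.
Proof.
rewrite (bigD1 j) //= eqxx [in RHS](bigD1 j) //= (eq_bigr f); first lra.
by move=> k /negbTE ->.
Qed.

Lemma Rmx_mulE j v a :
  (Rmx R j *m v) a 0 = if a == j then \sum_b v b 0 - 2 * v j 0 else v a 0.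
Proof.
rewrite mxE; under eq_bigr do rewrite mxE.
case: (eqVneq a j) => [_|ne].
  rewrite (bigD1 j) //= eqxx [X in _ = X - _](bigD1 j) //=.
  under eq_bigr => b /negbTE -> do rewrite mul1r.
  lra.
rewrite (bigD1 a) //= eqxx mul1r big1 ?addr0 // => b nb.
by rewrite eq_sym (negbTE nb) mul0r.
Qed.

(* The gain of the letter R_i on the vector v: the increase of the total
   sum of v when R_i is applied to it. *)
Definition gain v (i : 'I_5) : R := \sum_b v b 0 - 3 * v i 0.

Lemma wmass_Rmx_mul i M w :
  wmass (Rmx R i *m M) w - wmass M w = gain (M *m w) i.
Proof.
rewrite /wmass /gain -mulmxA.
under eq_bigr do rewrite Rmx_mulE.
rewrite (sum_update (fun b => (M *m w) b 0)); lra.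
Qed.

Lemma gain_Rmx j v k :
  gain (Rmx R j *m v) k = if k == j then - gain v j else gain v k + gain v j.
Proof.
have sumRv : \sum_b (Rmx R j *m v) b 0 = 2 * \sum_b v b 0 - 3 * v j 0.
  under eq_bigr do rewrite Rmx_mulE.
  rewrite (sum_update (fun b => v b 0)); lra.
by rewrite /gain sumRv Rmx_mulE; case: (eqVneq k j) => _; lra.
Qed.

Definition total x : R := \sum_k x k.
Definition refl (j : 'I_5) x : 'I_5 -> R :=
  fun k => if k == j then total x - 2 * x j else x k.
Definition evec (i : 'I_5) : 'I_5 -> R := fun k => (k == i)%:R.
Definition coeffs (i : 'I_5) (s : seq 'I_5) : 'I_5 -> R :=
  foldl (fun x j => refl j x) (evec i) s.
Definition nonneg x : Prop := forall k, 0 <= x k.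

Lemma total_refl j x : total (refl j x) = 2 * total x - 3 * x j.
Proof. by rewrite /total /refl sum_update -/(total x); lra. Qed.

Lemma total_evec i : total (evec i) = 1.
Proof.
by rewrite /total /evec (bigD1 i) //= eqxx big1 ?addr0 // => k /negbTE ->.
Qed.

Lemma word_mx_rcons s j : word_mx R (rcons s j) = word_mx R s *m Rmx R j.
Proof.
elim: s => [|a s IH] /=; first by rewrite /word_mx /= mul1mx mulmx1.
by rewrite /word_mx /= -/(word_mx R (rcons s j)) IH mulmxA.
Qed.

Lemma gain_word s w i :
  gain (word_mx R s *m w) i = \sum_k coeffs i s k * gain w k.
Proof.
elim/last_ind: s w i => [|s j IH] w i.
  rewrite /word_mx /= mul1mx /coeffs /= /evec (bigD1 i) //= eqxx mul1r.
  by rewrite big1 ?addr0 // => k /negbTE ->; rewrite mul0r.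
rewrite word_mx_rcons -mulmxA IH /coeffs foldl_rcons -/(coeffs i s).
set x := coeffs i s.
under eq_bigr do rewrite gain_Rmx.
rewrite (bigD1 j) //= eqxx [in RHS](bigD1 j) //= /refl eqxx.
under eq_bigr => k /negbTE -> do [].
under [in RHS]eq_bigr => k /negbTE -> do [].
have -> : total x = x j + \sum_(k < 5 | k != j) x k by rewrite /total (bigD1 j).
under eq_bigr do rewrite mulrDr.
rewrite big_split /= -mulr_suml; lra.
Qed.

Lemma refl_nonneg j x : nonneg x -> 2 * x j <= total x -> nonneg (refl j x).
Proof.
move=> x0 xj k; rewrite /refl; case: ifP => _; last exact: x0.
by rewrite subr_ge0.
Qed.

End GainAlgebra.

(* Appending p to the word W p c would complete a forbidden subword. *)
Definition pending (W : seq 'I_5) (p c : 'I_5) : Prop :=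
  exists u v, rcons (rcons W p) c = u ++ v /\ forbidden (rcons v p).

Lemma reduced_rcons {W j} : reduced (rcons W j) -> reduced W.
Proof.
case=> Hneq Hpat; split.
  move=> k hk; have := Hneq k; rewrite size_rcons !nth_rcons hk.
  have -> : (k < size W)%N by lia.
  by apply; lia.
move=> v hv; apply: Hpat; apply: infix_trans hv _.
exact: prefixW (prefix_rcons W j).
Qed.

Lemma reduced_rcons_neq {W a b} : reduced (rcons (rcons W a) b) -> a != b.
Proof.
case=> Hneq _; apply/eqP => ab.
apply: (Hneq (size W)); first by rewrite !size_rcons.
by rewrite -!cats1 -catA !nth_cat ltnn subnn /= ltnNge leqnSn /= subSnn /= ab.
Qed.

Lemma pending_not_reduced W p c :
  pending W p c -> ~ reduced (rcons (rcons (rcons W p) c) p).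
Proof.
case=> u [v [e f]] [_ Hpat]; apply: (Hpat (rcons v p)) => //.
by rewrite e rcons_cat; apply: suffix_infix.
Qed.

(* After p c p, appending c would create the square (R_p R_c)^2. *)
Lemma pending_square W p c : pending (rcons W p) c p.
Proof.
exists W, [:: p; c; p]; split; first by rewrite -!cats1 -!catA.
by exists 2%N; split => //= j h1 h2; lia.
Qed.

Lemma pending_extend W q p c : pending W q p -> pending (rcons (rcons W q) p) c q.
Proof.
case=> u [v [e [m [hm hs h13 hlast hmid]]]].
exists u, (v ++ [:: c; q]); split; first by rewrite e -!cats1 -!catA.
move: hs; rewrite size_rcons => hs.
set v' := rcons (v ++ [:: c; q]) c.
have old_letters k : (0 < k)%N -> (k <= size v)%N -> letter v' k = letter (rcons v q) k.
  move=> k0 kn; rewrite /letter /v' -cats1 -catA nth_cat nth_rcons.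
  by have -> : (k.-1 < size v)%N by lia.
have new_c1 : letter v' (size v).+1 = c.
  by rewrite /letter /v' -cats1 -catA nth_cat ltnn subnn.
have new_q : letter v' (size v).+2 = q.
  by rewrite /letter /v' -cats1 -catA nth_cat /= ltnNge leqnSn /= subSnn.
have new_c2 : letter v' (size v).+3 = c.
  rewrite /letter /v' -cats1 -catA nth_cat /=.
  have -> : ((size v).+2 < size v)%N = false by lia.
  by have -> : ((size v).+2 - size v = 2)%N by lia.
exists m.+1; split.
- lia.
- by rewrite size_rcons size_cat /=; lia.
- by rewrite !old_letters //; lia.
- have -> : (2 * m.+1 - 2 = (size v).+1)%N by lia.
  have -> : (2 * m.+1 = (size v).+3)%N by lia.
  by rewrite new_c1 new_c2.
- move=> j j1 j2; have [jle|jgt] := leqP j (m - 2).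
    by rewrite !old_letters; [exact: hmid|lia|lia|lia|lia].
  have -> : j = (m - 1)%N by lia.
  rewrite old_letters; [|lia|lia].
  have -> : (2 * (m - 1) + 3 = (size v).+2)%N by lia.
  have -> : (2 * (m - 1) = 2 * m - 2)%N by lia.
  rewrite new_q hlast.
  have -> : (2 * m = (size v).+1)%N by lia.
  by rewrite /letter nth_rcons ltnn eqxx.
Qed.

Section Invariant.

Context {R : realFieldType}.
Implicit Types x : 'I_5 -> R.

Definition inv (W : seq 'I_5) (p c : 'I_5) x : Prop :=
  [/\ total x <= 2 * x c + x p,
      ~ pending W p c -> x p <= x c &
      forall k, k != c -> k != p ->
        ~ (exists W', W = rcons W' k /\ pending W' k p) ->
        2 * x k <= total x - x c].

Lemma sum2_le {x a b} : nonneg x -> a != b -> x a + x b <= total x.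
Proof.
move=> x0 ab; have := @sum_uniq_le _ _ x [:: a; b] x0.
by rewrite !big_cons big_nil addr0 /= inE ab; apply.
Qed.

Lemma sum3_le {x a b c} :
  nonneg x -> a != b -> a != c -> b != c -> x a + x b + x c <= total x.
Proof.
move=> x0 ab ac bc; have := @sum_uniq_le _ _ x [:: a; b; c] x0.
by rewrite !big_cons big_nil addr0 addrA /= !inE negb_or ab ac bc; apply.
Qed.

(* Any admissible next letter j is at most half of the total, so the
   reflected vector stays nonnegative. *)
Lemma inv_half_total W p c j x :
  nonneg x -> inv W p c x -> p != c -> j != c ->
  (j = p -> ~ pending W p c) -> 2 * x j <= total x.
Proof.
move=> x0 [hlast hprev _] pc jc hjp.
have := sum2_le x0 pc; case: (eqVneq j p) hjp => [-> hjp|jp _].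
  by have := hprev (hjp erefl); lra.
have [pj cj] : p != j /\ c != j by rewrite !(eq_sym _ j).
by have := sum3_le x0 pc pj cj; have := x0 p; lra.
Qed.

Lemma inv_back W p c x :
  nonneg x -> inv W p c x -> p != c -> ~ pending W p c ->
  inv (rcons W p) c p (refl p x).
Proof.
move=> x0 [hlast hprev _] pc np; have xpc := hprev np.
have Rp : refl p x p = total x - 2 * x p by rewrite /refl eqxx.
have Rk k : k != p -> refl p x k = x k by move=> /negbTE kp; rewrite /refl kp.
have cp : c != p by rewrite eq_sym.
split.
- by rewrite total_refl Rp Rk //; lra.
- by move=> H; exfalso; apply: H; exact: pending_square.
- move=> k kp kc _; rewrite Rk // total_refl Rp.
  have [ck pk] : c != k /\ p != k by rewrite !(eq_sym _ k).
  by have := sum3_le x0 cp ck pk; have := x0 k; lra.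
Qed.

Lemma inv_fresh W p c j x :
  nonneg x -> inv W p c x -> p != c -> j != c -> j != p ->
  inv (rcons W p) c j (refl j x).
Proof.
move=> x0 [hlast hprev hother] pc jc jp.
have Rj : refl j x j = total x - 2 * x j by rewrite /refl eqxx.
have Rk k : k != j -> refl j x k = x k by move=> /negbTE kj; rewrite /refl kj.
have [cp cj pj] : [/\ c != p, c != j & p != j].
  by split; rewrite eq_sym.
have s3 := sum3_le x0 cp cj pj.
split.
- by rewrite total_refl Rj Rk //; lra.
- move=> np; rewrite Rk // Rj.
  have not_zigzag : ~ (exists W', W = rcons W' j /\ pending W' j p).
    by move=> [W' [eW zz]]; apply: np; rewrite eW; exact: pending_extend.
  by have := hother j jc jp not_zigzag; lra.
- move=> k kj kc hk; rewrite Rk // total_refl Rj.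
  case: (eqVneq k p) hk => [-> hk|kp _].
    have np : ~ pending W p c by move=> pend; apply: hk; exists W.
    by have := hprev np; lra.
  have := @sum_uniq_le _ _ x [:: c; p; j; k] x0.
  rewrite !big_cons big_nil addr0 /= !inE !negb_or cp cj pj !(eq_sym _ k) kp kj kc.
  by move/(_ isT); rewrite -/(total x); have := x0 p; have := x0 j; lra.
Qed.

Lemma inv_step W p c j x :
  nonneg x -> inv W p c x -> reduced (rcons (rcons (rcons W p) c) j) ->
  nonneg (refl j x) /\ inv (rcons W p) c j (refl j x).
Proof.
move=> x0 hinv red.
have pc : p != c by exact: reduced_rcons_neq (reduced_rcons red).
have jc : j != c by rewrite eq_sym; exact: reduced_rcons_neq red.
have hjp : j = p -> ~ pending W p c.
  by move=> jp pend; move: red; rewrite jp; exact: pending_not_reduced pend.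
split; first by apply: refl_nonneg => //; exact: inv_half_total hinv pc jc hjp.
case: (eqVneq j p) hjp => [-> hjp|jp _]; last exact: inv_fresh.
exact: inv_back x0 hinv pc (hjp erefl).
Qed.

Lemma inv_start i j :
  i != j -> nonneg (refl j (@evec R i)) /\ inv [::] i j (refl j (evec i)).
Proof.
move=> ij; set x := refl j (evec i).
have ji : j != i by rewrite eq_sym.
have xj : x j = 1 by rewrite /x /refl eqxx total_evec /evec (negbTE ji) mulr0n; lra.
have xi : x i = 1 by rewrite /x /refl (negbTE ij) /evec eqxx.
have x0 k : k != j -> k != i -> x k = 0.
  by move=> /negbTE kj /negbTE ki; rewrite /x /refl kj /evec ki.
have xS : total x = 2 by rewrite total_refl total_evec /evec (negbTE ji) mulr0n; lra.
split.
  move=> k; case: (eqVneq k j) => [->|kj]; first by rewrite xj ler01.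
  by case: (eqVneq k i) => [->|ki]; [rewrite xi ler01 | rewrite x0].
by split => [| _ |k kj ki _]; rewrite ?xS ?xj ?xi ?x0 //; lra.
Qed.

Lemma coeffs_inv i s {W p c} :
  reduced (rcons (rcons W p) c) -> i :: s = rcons (rcons W p) c ->
  nonneg (@coeffs R i s) /\ inv W p c (coeffs i s).
Proof.
elim/last_ind: s W p c => [|s j IH] W p c red e.
  by move/(congr1 size): e; rewrite !size_rcons.
rewrite /coeffs foldl_rcons -/(coeffs i s).
move: e red; rewrite -[i :: _]/(rcons (i :: s) j) => /rcons_inj [e <-] red.
case/lastP: s IH e => [|s q] IH e.
  move: e red; rewrite -[[:: i]]/(rcons [::] i) => /rcons_inj [<- <-] red.
  exact: inv_start (reduced_rcons_neq red).
move: e red; rewrite -[i :: _]/(rcons (i :: s) q) => /rcons_inj [<- <-].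
rewrite [i :: s]lastI => red.
have [x0 hinv] := IH _ _ _ (reduced_rcons red) (congr1 (rcons^~ q) (lastI i s)).
exact: inv_step x0 hinv red.
Qed.

Lemma coeffs_nonneg i s : reduced (i :: s) -> nonneg (@coeffs R i s).
Proof.
case/lastP: s => [|s c] red; first by move=> k; rewrite /coeffs /evec ler0n.
have e : i :: rcons s c = rcons (rcons (belast i s) (last i s)) c.
  by rewrite -lastI.
by move: red; rewrite e => red; have [] := coeffs_inv i (rcons s c) red e.
Qed.

End Invariant.

Theorem lemma4p4 (R : realFieldType) (w : 'cV[R]_5) :
  (forall i : 'I_5, wmass (Rmx R i) w >= wmass 1%:M w) ->
  forall (i : 'I_5) (U' : seq 'I_5), reduced (i :: U') ->
    wmass (word_mx R (i :: U')) w >= wmass (word_mx R U') w.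
Proof.
move=> hyp i U' red.
(* The increment is the gain of R_i on word(U') w, a combination of the
   gains of w with the coefficients attached to the reduced word. *)
rewrite -subr_ge0 [word_mx R (i :: U')]/= wmass_Rmx_mul gain_word.
apply: sumr_ge0 => k _; apply: mulr_ge0; first exact: coeffs_nonneg.
(* The hypothesis says exactly that each gain of w is nonnegative. *)
have := wmass_Rmx_mul k 1%:M w; rewrite mulmx1 mul1mx => <-.
by rewrite subr_ge0; exact: hyp.
Qed.
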